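(* Let $f$ be a frog model statistic with values in $[0,\infty]$. Suppose that for some nonroot vertex $v$ and all frog models $(\eta,S)$, $$f(\eta,S)=\sum_{i=1}^{\eta(v)}f\bigl(\sigma_{S_\cdot(v,i)}(\kappa_v(\eta,S))\bigr).$$ Then for all $(\eta,S)$ and all paths $P^1_\cdot,\dots,P^m_\cdot$ starting at $v$: (i) for every $m\geq1$, $(-1)^m\Delta_{P^1_\cdot}\cdots\Delta_{P^m_\cdot}f(\eta,S)\le0$ whenever all values $f(\sigma_{P^{u_1}_\cdot}\cdots\sigma_{P^{u_j}_\cdot}(\eta,S))$, $\{u_1,\dots,u_j\}\subseteq\{1,\dots,m\}$, are finite; (ii) if $f(\eta,S)=\infty$ then $f(\sigma_{P^1_\cdot}(\eta,S))=\infty$; (iii) if $f(\sigma_{P^1_\cdot}\sigma_{P^2_\cdot}(\eta,S))=\infty$ then $f(\sigma_{P^i_\cdot}(\eta,S))=\infty$ for $i=1$ or $i=2$.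
   Context: Frog model: $G$ countable with root $\emptyset$; $(\eta,S)$ consists of counts $\eta(v)\in\{0,1,\dots\}$ for $v\ne\emptyset$ and paths $S_\cdot(v,i)$ with $S_0(v,i)=v$; one active frog starts at $\emptyset$; sleeping frogs activate when an active frog visits their vertex, then follow their paths. $\kappa_v(\eta,S)$: delete all frogs at $v$. $\sigma_{P_\cdot}(\eta,S)$: add one extra frog with path $P_\cdot$ at $P_0$. $\Delta_{P_\cdot}f(\eta,S)=f(\sigma_{P_\cdot}(\eta,S))-f(\eta,S)$. *)

From Stdlib Require Import List.
From HB Require Import structures.
From mathcomp Require Import all_boot all_order all_algebra.
From mathcomp Require Import all_classical all_reals ereal.
Set Implicit Arguments. Unset Strict Implicit. Unset Printing Implicit Defensive.
Import Order.TTheory GRing.Theory Num.Theory.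

(* A path is a map nat -> V (S_0 is the starting vertex).
   A frog model (eta,S) is encoded as F : V -> seq (nat -> V):
   F v is the list [S(v,1); ...; S(v,eta(v))], so eta(v) = size (F v). *)

Definition fpath (V : Type) := nat -> V.
Definition fmodel (V : Type) := V -> seq (nat -> V).

Definition is_walk (V : Type) (E : V -> V -> Prop) (P : nat -> V) : Prop :=
  forall n, E (P n) (P n.+1).

Definition frog_model (V : Type) (E : V -> V -> Prop) (root : V)
  (F : fmodel V) : Prop :=
  F root = [::] /\
  (forall u P, In P (F u) -> P 0%N = u /\ is_walk E P).

Definition kappa (V : eqType) (v : V) (F : fmodel V) : fmodel V :=
  fun u => if u == v then [::] else F u.

Definition sigma (V : eqType) (P : nat -> V) (F : fmodel V) : fmodel V :=
  fun u => if u == P 0%N then rcons (F u) P else F u.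

Definition sigmas (V : eqType) (Ps : seq (nat -> V)) (F : fmodel V) : fmodel V :=
  foldr (@sigma V) F Ps.

Definition Delta (R : realType) (V : eqType) (P : nat -> V)
  (f : fmodel V -> \bar R) : fmodel V -> \bar R :=
  fun F => (f (sigma P F) - f F)%E.

Definition Deltas (R : realType) (V : eqType) (Ps : seq (nat -> V))
  (f : fmodel V -> \bar R) : fmodel V -> \bar R :=
  foldr (@Delta R V) f Ps.

(* membership of a path in a list of paths (paths have no decidable equality) *)
Definition path_in (V : Type) (P : nat -> V) (s : seq (nat -> V)) : Prop :=
  In P s.

(* By the hypothesis, every frog sleeping at [v] contributes the value [f]
   takes when it is the only frog at [v], independently of the other frogs
   at [v].  Hence [f] is additive in the frogs added at [v]:
   [f (sigma P G) = f G + gain G P] with [gain G P >= 0] unchanged by adding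
   further frogs at [v].  All differences of order at least two therefore
   vanish, the first difference is [gain G P >= 0], and (ii), (iii) follow
   because sums of nonnegative extended reals are [+oo] only when a summand
   is. *)

From HB Require Import structures.
From mathcomp Require Import all_boot all_order all_algebra.
From mathcomp Require Import all_classical all_reals ereal.
Set Implicit Arguments. Unset Strict Implicit. Unset Printing Implicit Defensive.
Import Order.TTheory GRing.Theory Num.Theory.
Local Open Scope ring_scope.
Local Open Scope ereal_scope.

Lemma ge0_adde3_pinfty (R : realDomainType) (a b c : \bar R) :
  0 <= a -> 0 <= b -> 0 <= c -> a + b + c = +oo ->
  a + b = +oo \/ a + c = +oo.
Proof. by case: a b c => [a| |] [b| |] [c| |] //; tauto. Qed.

Lemma mask_singleton (T : Type) (P : T) (Ps : seq T) :
  List.In P Ps -> exists m : bitseq, mask m Ps = [:: P].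
Proof.
elim: Ps => [[]|Q Qs IH] [->|P_in].
- by exists (true :: nseq (size Qs) false); rewrite /= mask_false.
- by have [m mP] := IH P_in; exists (false :: m).
Qed.

Section AdditiveStatistic.

Variables (R : realType) (V : eqType) (E : V -> V -> Prop) (root v : V).
Hypothesis v_neq_root : v != root.

Definition walk_from_v (P : nat -> V) := P 0%N = v /\ is_walk E P.

Lemma frog_model_kappa F :
  frog_model E root F -> frog_model E root (kappa v F).
Proof.
move=> [Froot Fpaths]; split; first by rewrite /kappa eq_sym (negbTE v_neq_root).
by move=> u P; rewrite /kappa; case: (u == v) => //; exact: Fpaths.
Qed.

Lemma frog_model_sigma P F :
  walk_from_v P -> frog_model E root F -> frog_model E root (sigma P F).
Proof.
move=> [P0 Pwalk] [Froot Fpaths]; split.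
  by rewrite /sigma P0 eq_sym (negbTE v_neq_root).
move=> u Q; rewrite /sigma; case: eqP => [->|_]; last exact: Fpaths.
by rewrite -cats1 => /List.in_app_iff [/Fpaths //|[<-|[]]].
Qed.

Lemma kappa_sigma P F : P 0%N = v -> kappa v (sigma P F) = kappa v F.
Proof. by move=> P0; apply: funext => u; rewrite /kappa /sigma P0; case: eqP. Qed.

Variable f : fmodel V -> \bar R.
Hypothesis f_ge0 : forall F, frog_model E root F -> 0 <= f F.
Hypothesis f_sum_at_v : forall F, frog_model E root F ->
  f F = \sum_(P <- F v) f (sigma P (kappa v F)).

Definition gain (F : fmodel V) (P : nat -> V) := f (sigma P (kappa v F)).

Lemma gain_ge0 F P :
  walk_from_v P -> frog_model E root F -> 0 <= gain F P.
Proof. by move=> vP F_ok; apply/f_ge0/frog_model_sigma/frog_model_kappa. Qed.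

Lemma gain_sigma F P Q : Q 0%N = v -> gain (sigma Q F) P = gain F P.
Proof. by move=> Q0; rewrite /gain kappa_sigma. Qed.

Lemma f_sigma F P :
  walk_from_v P -> frog_model E root F -> f (sigma P F) = f F + gain F P.
Proof.
move=> vP F_ok; have [P0 _] := vP.
have sigma_at_v : sigma P F v = rcons (F v) P by rewrite /sigma P0 eqxx.
rewrite (f_sum_at_v (frog_model_sigma vP F_ok)) (f_sum_at_v F_ok).
by rewrite kappa_sigma // sigma_at_v big_rcons.
Qed.

Lemma Deltas_cons P Ps F :
  Deltas (P :: Ps) f F = Deltas Ps f (sigma P F) - Deltas Ps f F.
Proof. by []. Qed.

Lemma Deltas1 F P : walk_from_v P -> frog_model E root F ->
  f F \is a fin_num -> Deltas [:: P] f F = gain F P.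
Proof. by move=> vP F_ok fF; rewrite /= /Delta f_sigma // addeAC subee ?add0e. Qed.

Lemma Deltas_cons_cons_eq0 Qs : forall F P Q,
  frog_model E root F -> (forall X, path_in X [:: P, Q & Qs] -> walk_from_v X) ->
  f F \is a fin_num ->
  (forall X, path_in X [:: P, Q & Qs] -> gain F X \is a fin_num) ->
  Deltas [:: P, Q & Qs] f F = 0.
Proof.
elim: Qs => [|Q' Qs IH] F P Q F_ok vPs fF gainF;
  have vP : walk_from_v P by apply: vPs; left.
all: have [P0 _] := vP; have PF_ok := frog_model_sigma vP F_ok.
all: have fPF : f (sigma P F) \is a fin_num
       by rewrite f_sigma // fin_numD fF gainF //; left.
all: rewrite Deltas_cons.
- have vQ : walk_from_v Q by apply: vPs; right; left.
  have gainQ : gain F Q \is a fin_num by apply: gainF; right; left.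
  by rewrite (Deltas1 vQ PF_ok fPF) (Deltas1 vQ F_ok fF) gain_sigma // subee.
- have vQs X (X_in : path_in X [:: Q, Q' & Qs]) : walk_from_v X.
    by apply: vPs; right.
  have gainQs X (X_in : path_in X [:: Q, Q' & Qs]) : gain F X \is a fin_num.
    by apply: gainF; right.
  rewrite (IH _ _ _ F_ok vQs fF gainQs) (IH _ _ _ PF_ok vQs fPF) ?sube0 //.
  by move=> X X_in; rewrite gain_sigma // gainQs.
Qed.

Variable F : fmodel V.
Hypothesis F_ok : frog_model E root F.

Lemma Deltas_alternating_sign Ps : (0 < size Ps)%N ->
  (forall P, path_in P Ps -> walk_from_v P) ->
  (forall m : bitseq, f (sigmas (mask m Ps) F) \is a fin_num) ->
  ((-1) ^+ size Ps)%:E * Deltas Ps f F <= 0.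
Proof.
move=> Ps_gt0 vPs fin_masks.
have fF : f F \is a fin_num by exact: fin_masks [::].
have gainF X : path_in X Ps -> gain F X \is a fin_num.
  move=> X_in; have [m mX] := mask_singleton X_in.
  have := fin_masks m; rewrite mX /= (f_sigma (vPs _ X_in) F_ok).
  by rewrite fin_numD => /andP[].
case: Ps Ps_gt0 vPs gainF fin_masks => [//|P [|Q Qs]] _ vPs gainF _.
  have vP : walk_from_v P by apply: vPs; left.
  by rewrite Deltas1 // mulN1e oppe_le0 gain_ge0.
by rewrite Deltas_cons_cons_eq0 // mule0.
Qed.

Lemma f_sigma_pinfty P : walk_from_v P -> f F = +oo -> f (sigma P F) = +oo.
Proof.
move=> vP fF; rewrite f_sigma // fF.
by have := gain_ge0 vP F_ok; case: (gain F P).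
Qed.

Lemma f_sigma2_pinfty P1 P2 : walk_from_v P1 -> walk_from_v P2 ->
  f (sigma P1 (sigma P2 F)) = +oo ->
  f (sigma P1 F) = +oo \/ f (sigma P2 F) = +oo.
Proof.
move=> vP1 vP2; have [P20 _] := vP2.
rewrite (f_sigma vP1 (frog_model_sigma vP2 F_ok)) gain_sigma // !f_sigma //.
by rewrite or_comm; apply: ge0_adde3_pinfty; [exact: f_ge0 | exact: gain_ge0 ..].
Qed.

End AdditiveStatistic.

Theorem lemma19 (R : realType) (V : countType) (E : V -> V -> Prop)
  (root v : V) (f : fmodel V -> \bar R) :
  v != root ->
  (forall F, frog_model E root F -> 0 <= f F) ->
  (forall F, frog_model E root F ->
     f F = \sum_(P <- F v) f (sigma P (kappa v F))) ->
  forall F, frog_model E root F ->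
  (forall Ps : seq (nat -> V), (0 < size Ps)%N ->
     (forall P, path_in P Ps -> P 0%N = v /\ is_walk E P) ->
     (forall m : bitseq, f (sigmas (mask m Ps) F) \is a fin_num) ->
     ((-1) ^+ size Ps)%:E * Deltas Ps f F <= 0)
  /\
  (forall P : nat -> V, P 0%N = v -> is_walk E P ->
     f F = +oo -> f (sigma P F) = +oo)
  /\
  (forall P1 P2 : nat -> V, P1 0%N = v -> is_walk E P1 ->
     P2 0%N = v -> is_walk E P2 ->
     f (sigma P1 (sigma P2 F)) = +oo ->
     f (sigma P1 F) = +oo \/ f (sigma P2 F) = +oo).
Proof.
move=> v_neq_root f_ge0 f_sum F F_ok; split; [|split].
- exact: (Deltas_alternating_sign v_neq_root f_ge0 f_sum F_ok).
- move=> P P0 Pwalk.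
  exact: (f_sigma_pinfty v_neq_root f_ge0 f_sum F_ok (conj P0 Pwalk)).
- move=> P1 P2 P10 P1walk P20 P2walk.
  exact: (f_sigma2_pinfty v_neq_root f_ge0 f_sum F_ok
            (conj P10 P1walk) (conj P20 P2walk)).
Qed.
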